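(* Let $P$ be a positive, completely labelled causal logic program, let $p$ be an atom, let $\Pi_p$ be the set of non-redundant proofs of $p$ with respect to $P$, and let $I$ be the least causal model of $P$. Then for every causal graph $G$: $G\in\{\mathrm{graph}(\pi)\mid\pi\in\Pi_p\}$ if and only if $G$ is a $\le$-maximal element of $I(p)$.
   Context: Causal graphs, causal values, causal programs, causal models and least models are as follows. Causal graphs over a label set $Lb$: graphs $\langle V,E\rangle$, $V\subseteq Lb$, reflexively and transitively closed; $G\le G'$ iff $G\supseteq G'$; $G<G'$ iff $G\le G'$ and $G\ne G'$; $G*G'=(G\cup G')^*$, $G\cdot G'$ is the closure of the graph with vertices $V\cup V'$ and edges $E\cup E'\cup(V\times V')$. Causal values are down-sets of causal graphs; $*$ is intersection, $+$ union, $U\cdot U'={\downarrow}\{G\cdot G'\mid G\in U,G'\in U'\}$; label $l$ denotes ${\downarrow}$ of the graph with single edge $(l,l)$, and $1$ the set of all causal graphs. A rule is $t:H\leftarrow B_1,\dots,B_n$ with $t\in Lb\cup\{1\}$; a positive program has no default negation; a program is completely labelled if every rule has a label in $Lb$ and no two rules share a label. A causal interpretation $I$ (atoms to causal values) is a model of positive $P$ iff $(I(B_1)*\dots*I(B_n))\cdot t\subseteq I(H)$ for every rule; the least model exists. A proof of atom $p$ w.r.t. $P$ is a derivation tree $\pi(p)=\frac{\pi(B_1)\ \cdots\ \pi(B_n)}{p}(R)$ with $R\in P$, head $p$ and body $\{B_1,\dots,B_n\}$ (antecedent $\top$ when $n=0$). For a completely labelled program, $\mathrm{graph}(\pi)$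 is the reflexive–transitive closure of the graph whose vertices are the labels of all rules used in $\pi$ and which contains, for each sub-derivation using rule $R$ with label $m$ and immediate subproofs $\pi(B_i)$ whose last rule has label $l_i$, the edge $(l_i,m)$. A proof $\pi$ of $p$ is redundant if there is another proof $\pi'$ of $p$ with $\mathrm{graph}(\pi)<\mathrm{graph}(\pi')$; otherwise it is non-redundant. *)

From Stdlib Require Import List Relations.
Import ListNotations.
Set Implicit Arguments.

Section Causal.
Variables (L : Type) (A : Type) .

Definition graph : Type := ((L -> Prop) * (L -> L -> Prop))%type.
Definition gV (G : graph) : L -> Prop := fst G.
Definition gE (G : graph) : L -> L -> Prop := snd G.

Definition rtclos (G : graph) : graph :=
  (gV G, fun x y => (x = y /\ gV G x) \/ clos_trans L (gE G) x y).

Definition causal_graph (G : graph) : Prop :=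
  (forall x y, gE G x y -> gV G x /\ gV G y) /\
  (forall x, gV G x -> gE G x x) /\
  (forall x y z, gE G x y -> gE G y z -> gE G x z).

(* G <= G'  iff  G is a supergraph of G' *)
Definition gle (G G' : graph) : Prop :=
  (forall x, gV G' x -> gV G x) /\ (forall x y, gE G' x y -> gE G x y).
Definition geq (G G' : graph) : Prop := gle G G' /\ gle G' G.
Definition glt (G G' : graph) : Prop := gle G G' /\ ~ geq G G'.

Definition gprod (G G' : graph) : graph :=
  rtclos (fun x => gV G x \/ gV G' x,
          fun x y => gE G x y \/ gE G' x y \/ (gV G x /\ gV G' y)).

Definition cvalue : Type := graph -> Prop.

Definition is_cvalue (U : cvalue) : Prop :=
  (forall G, U G -> causal_graph G) /\
  (forall G G', U G' -> causal_graph G -> gle G G' -> U G).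

Definition down (S : graph -> Prop) : cvalue :=
  fun G => causal_graph G /\ exists G', S G' /\ gle G G'.

Definition cv_one : cvalue := causal_graph.
Definition cv_inter (U U' : cvalue) : cvalue := fun G => U G /\ U' G.
Definition cv_mul (U U' : cvalue) : cvalue :=
  down (fun G => exists G1 G2, U G1 /\ U' G2 /\ geq G (gprod G1 G2)).

Definition single (l : L) : graph := (fun x => x = l, fun x y => x = l /\ y = l).
Definition cv_label (l : L) : cvalue := down (fun G => geq G (single l)).

(* a rule  t : H <- B1, ..., Bn ;  label None stands for 1 *)
Record rule : Type := Rule { rlab : option L; rhead : A; rbody : list A }.
Definition program : Type := rule -> Prop.

Definition term_value (t : option L) : cvalue :=
  match t with None => cv_one | Some l => cv_label l end.

Definition completely_labelled (P : program) : Prop :=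
  (forall R, P R -> exists l, rlab R = Some l) /\
  (forall R R', P R -> P R' -> rlab R = rlab R' -> R = R').

Definition cinterp : Type := A -> cvalue.
Definition is_cinterp (I : cinterp) : Prop := forall a, is_cvalue (I a).

Definition body_value (I : cinterp) (B : list A) : cvalue :=
  fold_right (fun b U => cv_inter (I b) U) cv_one B.

Definition is_model (P : program) (I : cinterp) : Prop :=
  forall R, P R -> forall G,
    cv_mul (body_value I (rbody R)) (term_value (rlab R)) G -> I (rhead R) G.

Definition least_model (P : program) (I : cinterp) : Prop :=
  is_cinterp I /\ is_model P I /\
  forall J, is_cinterp J -> is_model P J -> forall a G, I a G -> J a G.

Inductive proof : Type := Node : rule -> list proof -> proof.

Definition root_rule (pi : proof) : rule := match pi with Node R _ => R end.

Inductive is_proof (P : program) : A -> proof -> Prop :=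
| is_proof_node : forall R subs,
    P R -> Forall2 (is_proof P) (rbody R) subs ->
    is_proof P (rhead R) (Node R subs).

Inductive subproof : proof -> proof -> Prop :=
| subproof_refl : forall pi, subproof pi pi
| subproof_child : forall s pi R subs,
    In pi subs -> subproof s pi -> subproof s (Node R subs).

Definition proof_graph (pi : proof) : graph :=
  rtclos (fun x => exists s, subproof s pi /\ rlab (root_rule s) = Some x,
          fun x y => exists R subs s, subproof (Node R subs) pi /\ In s subs /\
                     rlab (root_rule s) = Some x /\ rlab R = Some y).

Definition non_redundant (P : program) (a : A) (pi : proof) : Prop :=
  is_proof P a pi /\
  ~ (exists pi', is_proof P a pi' /\ glt (proof_graph pi) (proof_graph pi')).

Definition maximal_in (U : cvalue) (G : graph) : Prop :=
  U G /\ forall G', U G' -> ~ glt G G'.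

End Causal.

(** The least model assigns to each atom exactly the down-closure of the graphs
    of its proofs.  On one side, by induction on proofs every model contains
    these graphs: the graph of a proof is the product of its subproof graphs
    with the root label, since every label of the proof reaches the root.  On
    the other side, the interpretation "below the graph of some proof" is
    itself a model.  In a down-closure of a family, the maximal elements are
    (up to equality) exactly the non-dominated members of the family, which for
    the family of proof graphs are the graphs of non-redundant proofs. *)
From Stdlib Require Import List Relations Classical.
Import ListNotations.
Set Implicit Arguments.

Section Graphs.
Variable L : Type.
Implicit Types G H K : graph L.

Lemma gle_refl G : gle G G.
Proof. split; auto. Qed.

Lemma gle_trans G1 G2 G3 : gle G1 G2 -> gle G2 G3 -> gle G1 G3.
Proof. intros [HV1 HE1] [HV2 HE2]; split; auto. Qed.

Lemma gle_glt_trans G1 G2 G3 : gle G1 G2 -> glt G2 G3 -> glt G1 G3.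
Proof.
  intros H12 [H23 Hne]; split; [eapply gle_trans; eauto|].
  intros [_ H31]; apply Hne; split; [|eapply gle_trans]; eauto.
Qed.

Lemma glt_gle_trans G1 G2 G3 : glt G1 G2 -> gle G2 G3 -> glt G1 G3.
Proof.
  intros [H12 Hne] H23; split; [eapply gle_trans; eauto|].
  intros [_ H31]; apply Hne; split; [|eapply gle_trans]; eauto.
Qed.

Lemma rtclos_causal G :
  (forall x y, gE G x y -> gV G x /\ gV G y) -> causal_graph (rtclos G).
Proof.
  intros HE; unfold rtclos, causal_graph, gE, gV in *; simpl; split; [|split].
  - intros x y [[-> Hx]|Ht]; auto.
    induction Ht as [x y Hxy|x y z _ [IH1 _] _ [_ IH2]]; auto.
  - intros x Hx; left; auto.
  - intros x y z [[-> Hx]|Ht1] [[-> Hy]|Ht2]; auto.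
    right; eapply t_trans; eauto.
Qed.

Lemma gle_rtclos K G : causal_graph K ->
  (forall x, gV G x -> gV K x) -> (forall x y, gE G x y -> gE K x y) ->
  gle K (rtclos G).
Proof.
  intros (_ & Hrefl & Htrans) HV HE; split; [exact HV|].
  intros x y [[-> Hx]|Ht]; [auto|].
  induction Ht; eauto.
Qed.

Lemma gprod_causal G H : causal_graph G -> causal_graph H -> causal_graph (gprod G H).
Proof.
  intros [CG _] [CH _]; apply rtclos_causal; simpl.
  intros x y [E|[E|[Ex Ey]]]; auto.
  - destruct (CG _ _ E); auto.
  - destruct (CH _ _ E); auto.
Qed.

Lemma single_causal (l : L) : causal_graph (single l).
Proof. split; [|split]; simpl; firstorder. Qed.

Lemma maximal_in_down_family (X : Type) (Q : X -> Prop) (f : X -> graph L)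
    (U : cvalue L) :
  is_cvalue U -> (forall x, Q x -> U (f x)) ->
  (forall G, U G -> exists x, Q x /\ gle G (f x)) ->
  forall G, causal_graph G ->
    ((exists x, (Q x /\ ~ (exists y, Q y /\ glt (f x) (f y))) /\ geq G (f x)) <->
     maximal_in U G).
Proof.
  intros [_ Udown] Uf Ubound G HG; split.
  - intros (x & [Qx Hmax] & [Hle Hge]); split; [eapply Udown; eauto|].
    intros G' UG' Hlt.
    destruct (Ubound _ UG') as (y & Qy & Hy).
    apply Hmax; exists y; split; [exact Qy|].
    eapply gle_glt_trans; [exact Hge|]; eapply glt_gle_trans; eauto.
  - intros [UG Hmax].
    destruct (Ubound _ UG) as (x & Qx & Hx).
    assert (Heq : geq G (f x)).
    { split; [exact Hx|].
      destruct (classic (gle (f x) G)) as [H|H]; [exact H|].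
      exfalso; apply (Hmax (f x)); [auto|].
      split; [exact Hx|]; intros [_ H']; auto. }
    exists x; split; [split; [exact Qx|]|exact Heq].
    intros (y & Qy & Hlt); apply (Hmax (f y)); [auto|].
    eapply gle_glt_trans; [apply Heq|exact Hlt].
Qed.

Lemma cv_mul_intro (U U' : cvalue L) G G1 G2 :
  causal_graph G -> U G1 -> U' G2 -> gle G (gprod G1 G2) -> cv_mul U U' G.
Proof.
  intros HG U1 U2 Hle; split; [exact HG|].
  exists (gprod G1 G2); split; [|exact Hle].
  exists G1, G2; repeat split; auto using gle_refl.
Qed.

End Graphs.

Section Proofs.
Variables L A : Type.
Implicit Types (P : program L A) (pi s : proof L A).

(** The induction principle generated for [proof] has no hypothesis for the
    subproofs, which sit inside a list. *)
Definition proof_nested_ind (Q : proof L A -> Prop)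
  (HNode : forall R subs, Forall Q subs -> Q (Node R subs)) : forall pi, Q pi :=
  fix F pi := match pi with
  | Node R subs => HNode R subs ((fix go l : Forall Q l := match l with
                    | [] => Forall_nil _ | x :: l' => Forall_cons _ (F x) (go l') end) subs)
  end.

Lemma subproof_trans s1 s2 s3 : subproof s1 s2 -> subproof s2 s3 -> subproof s1 s3.
Proof. intros H12 H23; induction H23; eauto using subproof_child. Qed.

Lemma subproof_child1 R {subs s} : In s subs -> subproof s (Node R subs).
Proof. intros Hin; eapply subproof_child; eauto using subproof_refl. Qed.

Lemma proof_graph_causal pi : causal_graph (proof_graph pi).
Proof.
  apply rtclos_causal; simpl.
  intros x y (R & subs & s & Hs & Hin & Hx & Hy); split.
  - exists s; split; auto. eapply subproof_trans; eauto using subproof_child1.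
  - exists (Node R subs); auto.
Qed.

Lemma proof_graph_subproof s pi : subproof s pi ->
  gle (proof_graph pi) (proof_graph s).
Proof.
  intros Hs; apply gle_rtclos; [apply proof_graph_causal| |]; simpl.
  - intros x (s' & H1 & H2); exists s'; split; eauto using subproof_trans.
  - intros x y (R & subs & s' & H1 & H2 & H3 & H4); right; apply t_step.
    exists R, subs, s'; repeat split; eauto using subproof_trans.
Qed.

Lemma Forall2_In_r {X Y} {Rel : X -> Y -> Prop} {l1 l2 y} :
  Forall2 Rel l1 l2 -> In y l2 -> exists x, In x l1 /\ Rel x y.
Proof.
  induction 1 as [|x0 y0 l1 l2 H0 _ IH]; simpl; [tauto|].
  intros [<-|Hin]; [eauto|].
  destruct (IH Hin) as (x & ? & ?); eauto.
Qed.

Lemma is_proof_subproof_rule P a pi : is_proof P a pi ->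
  forall s, subproof s pi -> P (root_rule s).
Proof.
  intros Hp s Hs; revert a Hp; induction Hs as [|s pi R subs Hin _ IH]; intros a Hp.
  - inversion Hp; auto.
  - inversion Hp as [? ? _ Hsubs]; subst.
    destruct (Forall2_In_r Hsubs Hin) as (b & _ & Hb); eauto.
Qed.

Definition fully_labelled pi : Prop :=
  forall s, subproof s pi -> exists l, rlab (root_rule s) = Some l.

Lemma fully_labelled_proof P a pi :
  completely_labelled P -> is_proof P a pi -> fully_labelled pi.
Proof. intros HCL Hp s Hs; eapply (proj1 HCL), is_proof_subproof_rule; eauto. Qed.

Lemma proof_graph_reach_root s pi : subproof s pi -> fully_labelled pi ->
  forall x l, rlab (root_rule s) = Some x -> rlab (root_rule pi) = Some l ->
  gE (proof_graph pi) x l.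
Proof.
  intros Hs; induction Hs as [pi|s pi R subs Hin Hs IH]; intros Hlab x l Hx Hl.
  - rewrite Hx in Hl; injection Hl as ->.
    apply proof_graph_causal; exists pi; split; auto using subproof_refl.
  - destruct (Hlab pi (subproof_child1 _ Hin)) as [y Hy].
    destruct (proof_graph_causal (Node R subs)) as (_ & _ & Htrans).
    apply Htrans with y.
    + apply (proof_graph_subproof (subproof_child1 R Hin)), IH; auto.
      intros s' Hs'; apply Hlab; eapply subproof_trans; eauto using subproof_child1.
    + right; apply t_step; exists R, subs, pi; repeat split; auto using subproof_refl.
Qed.

(** Since every label of [pi] reaches its root label, multiplying the graph of
    [pi] by that label adds nothing. *)
Lemma proof_graph_gle_gprod_root pi l : fully_labelled pi ->
  rlab (root_rule pi) = Some l ->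
  gle (proof_graph pi) (gprod (proof_graph pi) (single l)).
Proof.
  intros Hlab Hl; apply gle_rtclos; [apply proof_graph_causal| |]; simpl.
  - intros x [Hx| ->]; [exact Hx|]. exists pi; split; auto using subproof_refl.
  - intros x y [Hxy|[[-> ->]|[(s & Hs & Hx) ->]]].
    + exact Hxy.
    + apply proof_graph_causal; exists pi; split; auto using subproof_refl.
    + apply (proof_graph_reach_root Hs); auto.
Qed.

Lemma gprod_gle_proof_graph G1 G2 R subs l :
  causal_graph G1 -> causal_graph G2 -> gV G2 l -> rlab R = Some l ->
  (forall s, In s subs -> gle G1 (proof_graph s)) ->
  gle (gprod G1 G2) (proof_graph (Node R subs)).
Proof.
  intros HG1 HG2 Hl HR Hsubs.
  apply gle_rtclos; [apply gprod_causal; auto| |]; simpl.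
  - intros x (s & Hs & Hx); inversion Hs as [|s' c ? ? Hin Hc]; subst.
    + simpl in Hx; rewrite HR in Hx; injection Hx as ->; auto.
    + left; apply (Hsubs c Hin); exists s; auto.
  - intros x y (R' & subs' & s & Hs & Hin & Hx & Hy); right.
    inversion Hs as [|s' c ? ? Hc Hsc]; subst.
    + apply t_step; right; right; split.
      * apply (Hsubs s Hin); exists s; split; auto using subproof_refl.
      * rewrite HR in Hy; injection Hy as ->; exact Hl.
    + apply t_step; left; apply (Hsubs c Hc); right; apply t_step.
      exists R', subs', s; auto.
Qed.

Lemma body_value_causal (I : cinterp L A) B G : body_value I B G -> causal_graph G.
Proof. induction B as [|b B IH]; simpl; [auto|]. intros [_ HB]; auto. Qed.

Lemma body_value_intro (I : cinterp L A) B Gs G :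
  is_cinterp I -> causal_graph G -> Forall2 I B Gs ->
  (forall H, In H Gs -> gle G H) -> body_value I B G.
Proof.
  intros HI HG HB Hle; induction HB as [|b H B Gs Hb _ IH]; simpl; [exact HG|].
  split.
  - apply (proj2 (HI b)) with H; [exact Hb|exact HG|apply Hle; simpl; auto].
  - apply IH; intros; apply Hle; simpl; auto.
Qed.

Lemma model_proof_graph P (I : cinterp L A) :
  completely_labelled P -> is_cinterp I -> is_model P I ->
  forall pi a, is_proof P a pi -> I a (proof_graph pi).
Proof.
  intros HCL HI HM pi; induction pi as [R subs IH] using proof_nested_ind.
  intros a Hp; inversion Hp as [? ? HPR Hsubs]; subst.
  destruct (proj1 HCL R HPR) as [l Hl].
  apply (HM R HPR).
  apply cv_mul_intro with (proof_graph (Node R subs)) (single l);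
    [apply proof_graph_causal| | |].
  - apply body_value_intro with (map (@proof_graph L A) subs);
      [exact HI|apply proof_graph_causal| |].
    + clear Hp; induction Hsubs; inversion IH; subst; constructor; auto.
    + intros H Hin; apply in_map_iff in Hin as (s & <- & Hs).
      apply proof_graph_subproof, subproof_child1, Hs.
  - rewrite Hl; split; [apply single_causal|].
    exists (single l); split; split; apply gle_refl.
  - apply proof_graph_gle_gprod_root; [|exact Hl].
    eapply fully_labelled_proof; eauto.
Qed.

Definition proof_interp P : cinterp L A := fun a G =>
  causal_graph G /\ exists pi, is_proof P a pi /\ gle G (proof_graph pi).

Lemma proof_interp_cinterp P : is_cinterp (proof_interp P).
Proof.
  intros a; split; [intros G [HG _]; exact HG|].
  intros G G' [_ (pi & Hp & Hle)] HG Hle'.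
  split; [exact HG|]; exists pi; split; [|eapply gle_trans]; eauto.
Qed.

Lemma body_value_proof_interp {P B G} : body_value (proof_interp P) B G ->
  exists subs, Forall2 (is_proof P) B subs /\
               forall s, In s subs -> gle G (proof_graph s).
Proof.
  induction B as [|b B IH]; simpl.
  - intros _; exists []; split; [constructor|contradiction].
  - intros [[_ (pi & Hp & Hle)] HB]; destruct (IH HB) as (subs & Hsubs & Hsle).
    exists (pi :: subs); split; [constructor; auto|].
    intros s [<-|Hs]; auto.
Qed.

Lemma proof_interp_model P : completely_labelled P -> is_model P (proof_interp P).
Proof.
  intros HCL R HPR G [HG (G' & (G1 & G2 & HB & HL & Heq) & HGG')].
  destruct (proj1 HCL R HPR) as [l Hl]; rewrite Hl in HL.
  destruct HL as [HG2 (G3 & [H3 _] & H23)].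
  destruct (body_value_proof_interp HB) as (subs & Hsubs & Hle).
  split; [exact HG|]; exists (Node R subs); split; [constructor; auto|].
  eapply gle_trans; [exact HGG'|]; eapply gle_trans; [apply Heq|].
  apply gprod_gle_proof_graph with l; eauto using body_value_causal.
  apply H23, H3; reflexivity.
Qed.

End Proofs.

Theorem theorem3 (L A : Type) (P : program L A) (p : A) (I : cinterp L A) :
  completely_labelled P -> least_model P I ->
  forall G : graph L, causal_graph G ->
    ((exists pi, non_redundant P p pi /\ geq G (proof_graph pi)) <->
     maximal_in (I p) G).
Proof.
  intros HCL [HI [HM Hleast]].
  apply maximal_in_down_family; [apply HI| |].
  - intros pi Hp; eapply model_proof_graph; eauto.
  - intros G HIG.
    destruct (Hleast _ (proof_interp_cinterp P) (proof_interp_model HCL) _ _ HIG)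
      as [_ (pi & Hp & Hle)].
    eauto.
Qed.
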